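(* Let $d\in\mathbb N$, $\mathcal D=\{1,\dots,d\}$, $w:\mathbb Z^d\to[1,\infty)$ a weight function, $\delta\in(0,1)$, and $f\in\mathrm H^w(\mathbb T^d)$. Let $d^{\mathrm{sup}}_\delta$ be the superposition dimension of $\mathrm H^w(\mathbb T^d)$ for $\delta$. If there exists a subset of ANOVA terms $U\subseteq U_{d^{\mathrm{sup}}_\delta}$ and $\varepsilon>0$ such that $\varrho(\mathbf u,f)<\varepsilon$ for every $\mathbf u\in U_{d^{\mathrm{sup}}_\delta}\setminus U$, then $$\frac{\|f-\mathrm T_Uf\|_{\mathrm L_2(\mathbb T^d)}}{\|f\|_{\mathrm H^w(\mathbb T^d)}}\le\sqrt{1-\delta}+\sqrt{|U_{d^{\mathrm{sup}}_\delta}\setminus U|\,\varepsilon}.$$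
   Context: $\mathbb T=[0,1)$ with periodic identification; $c_{\mathbf k}(g)$ Fourier coefficients. $\mathrm H^w(\mathbb T^d)=\{g\in\mathrm L_2:\|g\|_{\mathrm H^w}=(\sum_{\mathbf k}w(\mathbf k)^2|c_{\mathbf k}(g)|^2)^{1/2}<\infty\}$. For $\mathbf u\subseteq\mathcal D$: $\mathrm P_{\mathbf u}g(\mathbf x_{\mathbf u})=\int_{\mathbb T^{|\mathcal D\setminus\mathbf u|}}g(\mathbf x)\,d\mathbf x_{\mathcal D\setminus\mathbf u}$, ANOVA terms $g_{\mathbf u}=\mathrm P_{\mathbf u}g-\sum_{\mathbf v\subsetneq\mathbf u}g_{\mathbf v}$ (recursively). Variance $\sigma^2(g)=\|g\|_{\mathrm L_2}^2-|c_{\mathbf 0}(g)|^2$; global sensitivity index $\varrho(\mathbf u,g)=\sigma^2(g_{\mathbf u})/\sigma^2(g)$. $U_s=\{\mathbf u\subseteq\mathcal D:|\mathbf u|\le s\}$. Superposition dimension: $d^{\mathrm{sup}}_\delta=\min\{s\in\mathcal D:\sup_{g\in\mathrm H^w,\|g\|_{\mathrm H^w}\le1}\sum_{\mathbf u\subseteq\mathcal D,|\mathbf u|>s}\|g_{\mathbf u}\|^2_{\mathrm L_2}\le1-\delta\}$. A subset of ANOVA terms is a $U\subseteq\mathcal P(\mathcal D)$ closed under taking subsets; $\mathrm T_Uf=\sum_{\mathbf u\in U}f_{\mathbf u}$. *)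

From HB Require Import structures.
From mathcomp Require Import all_boot all_order all_algebra.
From mathcomp Require Import all_classical all_reals all_analysis.
From mathcomp Require Import complex.
Set Implicit Arguments. Unset Strict Implicit. Unset Printing Implicit Defensive.
Import Order.TTheory GRing.Theory Num.Theory.
Local Open Scope ring_scope.
Local Open Scope classical_set_scope.

(* Frequency lattice Z^d, indexed by D = {1,..,d} ~ 'I_d *)
Definition freq (d : nat) := {ffun 'I_d -> int}.

(* A function g : T^d -> C in L_2 is represented by its Fourier coefficients
   c_k(g), k in Z^d (Parseval / Riesz-Fischer) *)
Definition coefs (R : realType) (d : nat) := freq d -> R[i].

Definition abs2 (R : realType) (z : R[i]) : R :=
  (complex.Re z) ^+ 2 + (complex.Im z) ^+ 2.

Definition L2sq (R : realType) d (g : coefs R d) : \bar R :=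
  \esum_(k in [set: freq d]) (abs2 (g k))%:E.
Definition Hwsq (R : realType) d (w : freq d -> R) (g : coefs R d) : \bar R :=
  \esum_(k in [set: freq d]) (w k ^+ 2 * abs2 (g k))%:E.

Definition L2norm (R : realType) d (g : coefs R d) : R := Num.sqrt (fine (L2sq g)).
Definition Hwnorm (R : realType) d (w : freq d -> R) (g : coefs R d) : R :=
  Num.sqrt (fine (Hwsq w g)).

Definition in_Hw (R : realType) d (w : freq d -> R) (g : coefs R d) : Prop :=
  (Hwsq w g < +oo)%E.

Definition k0 d : freq d := [ffun _ => 0%R].

(* P_u g (x_u) = integral of g over x_{D\u}; on the Fourier side this keeps
   exactly the coefficients c_k with k_j = 0 for all j outside u. *)
Definition Pu (R : realType) d (u : {set 'I_d}) (g : coefs R d) : coefs R d :=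
  fun k => if [forall j, (j \notin u) ==> (k j == 0%R)] then g k else 0.

(* ANOVA terms g_u = P_u g - sum_{v proper subset of u} g_v, by recursion
   (fuel n, with n = #|u| sufficient since #|v| < #|u| for v proper in u). *)
Fixpoint anova_aux (R : realType) d (n : nat) (u : {set 'I_d}) (g : coefs R d)
  : coefs R d :=
  match n with
  | 0 => Pu u g
  | n'.+1 => fun k => Pu u g k - \sum_(v : {set 'I_d} | v \proper u) anova_aux n' v g k
  end.
Definition anova (R : realType) d (u : {set 'I_d}) (g : coefs R d) : coefs R d :=
  anova_aux #|u| u g.

Definition variance (R : realType) d (g : coefs R d) : R :=
  fine (L2sq g) - abs2 (g (k0 d)).
Definition gsi (R : realType) d (u : {set 'I_d}) (g : coefs R d) : R :=
  variance (anova u g) / variance g.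

Definition TU (R : realType) d (U : {set {set 'I_d}}) (g : coefs R d) : coefs R d :=
  fun k => \sum_(u in U) anova u g k.

Definition anova_subset d (U : {set {set 'I_d}}) : Prop :=
  (finset.set0 : {set 'I_d}) \in U /\ forall u v : {set 'I_d}, v \subset u -> u \in U -> v \in U.

Definition supdim_cond (R : realType) d (w : freq d -> R) (delta : R) (s : nat)
  : Prop :=
  (ereal_sup [set (\sum_(u : {set 'I_d} | (s < #|u|)%N) L2sq (anova u g))%E
             | g in [set g : coefs R d | in_Hw w g /\ (Hwnorm w g <= 1)%R]]
   <= (1 - delta)%:E)%E.

(* d^sup_delta = min { s in {1..d} : supdim_cond s } (the condition always
   holds for s = d, so d is only a formal default) *)
Definition supdim (R : realType) d (w : freq d -> R) (delta : R) : nat :=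
  \big[minn/d]_(s < d.+1 | (0 < s)%N && `[< supdim_cond w delta s >]) s.

From Pilot Require Import Defs.
From HB Require Import structures.
From mathcomp Require Import all_boot all_order all_algebra.
From mathcomp Require Import all_classical all_reals all_analysis.
From mathcomp Require Import complex.
Import Order.TTheory GRing.Theory Num.Theory.
Set Implicit Arguments. Unset Strict Implicit. Unset Printing Implicit Defensive.
Local Open Scope ring_scope.

(* On the Fourier side the ANOVA term [f_u] keeps exactly the coefficients of [f]
   whose frequency has support [u], so the ANOVA terms are orthogonal and
   ||f - T_U f||^2 is the sum of ||f_u||^2 over u outside U.  The terms with
   |u| > d^sup add up to at most (1 - delta) ||f||_{H^w}^2, by the definition
   of d^sup applied to f / ||f||_{H^w}; each remaining term satisfies
   ||f_u||^2 = rho(u, f) sigma^2(f) <= eps ||f||_{H^w}^2 because w >= 1.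
   Conclude with sqrt (a + b) <= sqrt a + sqrt b. *)

Lemma esumZl (R : realType) (T : choiceType) (S : set T) (a : T -> \bar R) (c : R) :
  0 <= c -> (forall i, S i -> 0 <= a i)%E ->
  (\esum_(i in S) (c%:E * a i) = c%:E * \esum_(i in S) a i)%E.
Proof.
move=> c0 a0; rewrite /esum -ereal_supZl//; last first.
  by apply/set0P; exists 0%E, set0; [exact: fsets_set0 | rewrite fsbig_set0].
congr ereal_sup; rewrite image_comp; apply: eq_imagel => A [finA AS] /=.
rewrite !fsbig_finite// !big_seq ge0_sume_distrr// => i.
by rewrite in_fset_set// => /set_mem/AS/a0.
Qed.

Lemma sqrtrD_le (R : rcfType) (a b : R) : 0 <= a -> 0 <= b ->
  Num.sqrt (a + b) <= Num.sqrt a + Num.sqrt b.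
Proof.
move=> a0 b0; have ab0 : 0 <= Num.sqrt a + Num.sqrt b by rewrite addr_ge0 ?sqrtr_ge0.
rewrite -(ger0_norm ab0) -sqrtr_sqr ler_sqrt ?sqr_ge0// sqrrD !sqr_sqrtr//.
by rewrite lerD2r lerDl mulrn_wge0// mulr_ge0 ?sqrtr_ge0.
Qed.

Lemma ler_sqrt_ratio (R : rcfType) (a h c : R) : 0 <= c -> a <= c * h ->
  Num.sqrt a / Num.sqrt h <= Num.sqrt c.
Proof.
move=> c0 ach; have [h_gt0|h_le0] := ltP 0 h; last first.
  by rewrite (ler0_sqrtr h_le0) invr0 mulr0 sqrtr_ge0.
by rewrite ler_pdivrMr ?sqrtr_gt0// -sqrtrM// ler_wsqrtr.
Qed.

Lemma sum_if_eq (I : finType) (V : nmodType) (P : pred I) (i0 : I) (x : V) :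
  \sum_(i | P i) (if i0 == i then x else 0) = if P i0 then x else 0.
Proof.
rewrite -big_mkcondr; case: ifP => Pi0.
  by rewrite (big_pred1 i0) // => i /=; rewrite eq_sym andb_idl // => /eqP ->.
by rewrite big_pred0 // => i; case: eqP => [<-|]; rewrite ?Pi0 ?andbF.
Qed.

Section Fourier.
Variables (R : realType) (d : nat).
Implicit Types (g : coefs R d) (k : freq d) (u : {set 'I_d}).

Definition supp k : {set 'I_d} := [set j | k j != 0].

Lemma supp_k0 : supp (k0 d) = finset.set0.
Proof. by apply/setP => j; rewrite !inE ffunE eqxx. Qed.

Lemma Pu_supp u g k : Pu u g k = if supp k \subset u then g k else 0.
Proof.
congr (if _ then _ else _); apply/forallP/fintype.subsetP => [h j | h j].
  by rewrite inE; apply: contraLR => ju; rewrite negbK; exact: implyP (h j) ju.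
by apply/implyP; apply: contraLR; rewrite negbK => kj; apply: h; rewrite inE.
Qed.

Lemma anova_aux_supp n u g k : (#|u| <= n)%N ->
  anova_aux n u g k = if supp k == u then g k else 0.
Proof.
elim: n u => [|n IH] u u_le /=.
  by move: u_le; rewrite leqn0 cards_eq0 => /eqP ->; rewrite Pu_supp finset.subset0.
rewrite Pu_supp (eq_bigr (fun v => if supp k == v then g k else 0)); last first.
  by move=> v /proper_card v_lt; apply: IH; rewrite -ltnS (leq_trans v_lt).
rewrite sum_if_eq finset.properEneq; have [->|_] := eqVneq (supp k) u.
  by rewrite subxx subr0.
by case: (_ \subset _); rewrite /= ?subrr.
Qed.

Lemma anova_supp u g k : anova u g k = if supp k == u then g k else 0.
Proof. exact: anova_aux_supp. Qed.

Lemma TU_supp (U : {set {set 'I_d}}) g k : TU U g k = if supp k \in U then g k else 0.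
Proof. by rewrite /TU; under eq_bigr do rewrite anova_supp; rewrite sum_if_eq. Qed.

Lemma abs2_ge0 (z : R[i]) : 0 <= abs2 z.
Proof. by rewrite addr_ge0 ?sqr_ge0. Qed.

Lemma abs20 : abs2 (0 : R[i]) = 0.
Proof. by rewrite /abs2 expr0n addr0. Qed.

Lemma abs2_scale (c : R) (z : R[i]) : abs2 ((c%:C)%C * z) = c ^+ 2 * abs2 z.
Proof. by case: z => a b; rewrite /abs2 /= !mul0r subr0 addr0 !exprMn mulrDr. Qed.

Lemma abs2_if_ge0 (b : bool) (z : R[i]) : (0 <= if b then (abs2 z)%:E else 0)%E.
Proof. by case: b; rewrite ?lee_fin ?abs2_ge0. Qed.

Lemma L2sq_ge0 g : (0 <= L2sq g)%E.
Proof. by apply: esum_ge0 => k _; rewrite lee_fin abs2_ge0. Qed.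

Lemma L2sq_anova u g : L2sq (anova u g) =
  \esum_(k in [set: freq d]) (if supp k == u then (abs2 (g k))%:E else 0)%E.
Proof. by apply: eq_esum => k _; rewrite anova_supp; case: ifP; rewrite ?abs20. Qed.

Lemma L2sq_anova_le u g : (L2sq (anova u g) <= L2sq g)%E.
Proof.
by rewrite L2sq_anova; apply: le_esum => k _; case: ifP; rewrite ?lee_fin ?abs2_ge0.
Qed.

Lemma L2sq_anova_fin_num u g : (L2sq g < +oo)%E -> L2sq (anova u g) \is a fin_num.
Proof.
by move=> g_fin; rewrite ge0_fin_numE ?L2sq_ge0 // (le_lt_trans (L2sq_anova_le u g)).
Qed.

Lemma L2sq_sub_TU (U : {set {set 'I_d}}) g :
  L2sq (fun k => g k - TU U g k) = (\sum_(u | u \notin U) L2sq (anova u g))%E.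
Proof.
under eq_bigr do rewrite L2sq_anova.
rewrite -esum_sum => [|k u _ _]; last exact: abs2_if_ge0.
apply: eq_esum => k _; rewrite sum_if_eq TU_supp.
by case: ifP; rewrite ?subrr ?subr0 ?abs20.
Qed.

Lemma L2sq_anovaD_k0 u g : u != finset.set0 ->
  (L2sq (anova u g) + (abs2 (g (k0 d)))%:E <= L2sq g)%E.
Proof.
move=> u0; pose e0 k := (if supp k == finset.set0 then (abs2 (g k))%:E else 0)%E.
have k0_le : ((abs2 (g (k0 d)))%:E <= \esum_(k in [set: freq d]) e0 k)%E.
  apply: esum_ge; exists [set k0 d]%classic; first by split; [exact: finite_set1 | ].
  by rewrite fsbig_set1 /e0 supp_k0 eqxx.
rewrite L2sq_anova (le_trans (leeD2l _ k0_le)) // -esumD => [|k _|k _];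
  [|exact: abs2_if_ge0..].
apply: le_esum => k _; rewrite /e0; have [->|_] := eqVneq (supp k) u.
  by rewrite (negPf u0) adde0.
by rewrite add0e; case: ifP; rewrite ?lee_fin ?abs2_ge0.
Qed.

Lemma variance_anova u g : u != finset.set0 ->
  Defs.variance (anova u g) = fine (L2sq (anova u g)).
Proof.
by move=> u0; rewrite /Defs.variance anova_supp supp_k0 eq_sym (negPf u0) abs20 subr0.
Qed.

Lemma variance_anova_le u g : (L2sq g < +oo)%E -> u != finset.set0 ->
  Defs.variance (anova u g) <= Defs.variance g.
Proof.
move=> g_fin u0; have g_fin_num : L2sq g \is a fin_num by rewrite ge0_fin_numE ?L2sq_ge0.
rewrite variance_anova // /Defs.variance lerBrDr -lee_fin EFinD !fineK ?L2sq_anova_fin_num //.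
exact: L2sq_anovaD_k0.
Qed.

(* No hypothesis [variance g != 0] is needed: if it vanishes, so does the left side,
   and [gsi u g] is a division by 0, hence 0. *)
Lemma variance_anova_gsi u g : (L2sq g < +oo)%E -> u != finset.set0 ->
  Defs.variance (anova u g) = gsi u g * Defs.variance g.
Proof.
move=> g_fin u0; rewrite /gsi; have [vg0|vg_ne0] := eqVneq (Defs.variance g) 0; last first.
  by rewrite divfK.
have := variance_anova_le g_fin u0; rewrite vg0 mulr0 => vu_le0.
by apply/le_anti; rewrite vu_le0 variance_anova // fine_ge0 // L2sq_ge0.
Qed.

End Fourier.

Section Weighted.
Variables (R : realType) (d : nat) (w : freq d -> R).
Implicit Types (g : coefs R d) (u : {set 'I_d}).

Lemma supdim_cond_supdim delta : delta <= 1 -> supdim_cond w delta (supdim w delta).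
Proof.
move=> delta_le1; apply: (big_ind (supdim_cond w delta)).
- apply: ge_ereal_sup => _ [g _ <-]; rewrite big_pred0 ?lee_fin ?subr_ge0 // => u.
  by rewrite ltnNge (leq_trans (max_card _)) ?card_ord.
- by move=> s t; rewrite /minn; case: ifP.
- by move=> s /andP[_ /asboolP].
Qed.

Lemma Hwsq_ge0 g : (0 <= Hwsq w g)%E.
Proof. by apply: esum_ge0 => k _; rewrite lee_fin mulr_ge0 ?sqr_ge0 ?abs2_ge0. Qed.

Lemma Hwsq_scale (c : R) g :
  Hwsq w (fun k => (c%:C)%C * g k) = ((c ^+ 2)%:E * Hwsq w g)%E.
Proof.
rewrite -esumZl ?sqr_ge0 //; last by move=> k _; rewrite lee_fin mulr_ge0 ?sqr_ge0 ?abs2_ge0.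
by apply: eq_esum => k _; rewrite abs2_scale -EFinM mulrCA.
Qed.

Lemma L2sq_anova_scale (c : R) u g :
  L2sq (anova u (fun k => (c%:C)%C * g k)) = ((c ^+ 2)%:E * L2sq (anova u g))%E.
Proof.
rewrite !L2sq_anova -esumZl => [||k _]; last exact: abs2_if_ge0; last exact: sqr_ge0.
by apply: eq_esum => k _; case: ifP; rewrite ?mule0 ?abs2_scale.
Qed.

Lemma Hwsq_fin_num g : in_Hw w g -> Hwsq w g \is a fin_num.
Proof. by move=> g_fin; rewrite ge0_fin_numE ?Hwsq_ge0. Qed.

Lemma L2norm_div_Hwnorm_le g h c : in_Hw w h -> 0 <= c ->
  (L2sq g <= c%:E * Hwsq w h)%E -> L2norm g / Hwnorm w h <= Num.sqrt c.
Proof.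
move=> h_fin c0 g_le; apply: ler_sqrt_ratio c0 _.
have h_fin_num := Hwsq_fin_num h_fin.
have g_fin_num : L2sq g \is a fin_num.
  rewrite ge0_fin_numE ?L2sq_ge0 // (le_lt_trans g_le) //.
  by rewrite -(fineK h_fin_num) -EFinM ltry.
by rewrite -lee_fin EFinM !fineK.
Qed.

Hypothesis w_ge1 : forall k, 1 <= w k.

Lemma L2sq_le_Hwsq g : (L2sq g <= Hwsq w g)%E.
Proof.
apply: le_esum => k _; rewrite lee_fin ler_peMl ?abs2_ge0 //.
by rewrite expr_ge1 // (le_trans _ (w_ge1 k)).
Qed.

Lemma L2sq_lt_pinfty g : in_Hw w g -> (L2sq g < +oo)%E.
Proof. exact: le_lt_trans (L2sq_le_Hwsq g). Qed.

Lemma supdim_cond_le delta s g : supdim_cond w delta s -> in_Hw w g ->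
  (\sum_(u : {set 'I_d} | (s < #|u|)%N) L2sq (anova u g) <= (1 - delta)%:E * Hwsq w g)%E.
Proof.
move=> cond g_fin; set H := fine (Hwsq w g).
have HE : Hwsq w g = H%:E by rewrite fineK ?Hwsq_fin_num.
have [H_gt0|H_le0] := ltP 0 H; last first.
  rewrite HE (@le_anti _ _ H 0) ?H_le0 ?fine_ge0 ?Hwsq_ge0 // mule0.
  apply: sume_le0 => u _; rewrite (le_trans (L2sq_anova_le u g)) //.
  by rewrite (le_trans (L2sq_le_Hwsq g)) // HE lee_fin.
pose c := (Num.sqrt H)^-1; have c2 : c ^+ 2 = H^-1 by rewrite exprVn sqr_sqrtr ?ltW.
pose gn k := (c%:C)%C * g k.
have gn_unit : Hwsq w gn = 1%E by rewrite Hwsq_scale HE -EFinM c2 mulVf ?gt_eqF.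
have gn_le : (\sum_(u : {set 'I_d} | (s < #|u|)%N) L2sq (anova u gn) <= (1 - delta)%:E)%E.
  apply: le_trans cond; apply: ereal_sup_ubound; exists gn => //.
  by split; rewrite /in_Hw ?/Hwnorm gn_unit ?ltry ?sqrtr1.
move: gn_le; under eq_bigr do rewrite L2sq_anova_scale.
rewrite -ge0_sume_distrr => [|u _]; last exact: L2sq_ge0.
by rewrite c2 -lee_pdivlMl ?invr_gt0 // invrK HE muleC.
Qed.

Lemma L2sq_anova_le_gsi u g eps : in_Hw w g -> u != finset.set0 -> 0 <= eps ->
  gsi u g <= eps -> (L2sq (anova u g) <= eps%:E * Hwsq w g)%E.
Proof.
move=> g_fin u0 eps0 gsi_le; have L2_fin := L2sq_lt_pinfty g_fin.
have L2_fin_num : L2sq g \is a fin_num by rewrite ge0_fin_numE ?L2sq_ge0.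
have var_ge0 : 0 <= Defs.variance g.
  rewrite (le_trans _ (variance_anova_le L2_fin u0)) // variance_anova //.
  exact/fine_ge0/L2sq_ge0.
rewrite -(fineK (L2sq_anova_fin_num u L2_fin)) -(fineK (Hwsq_fin_num g_fin)).
rewrite -EFinM lee_fin -variance_anova // variance_anova_gsi //.
rewrite (le_trans (ler_wpM2r var_ge0 gsi_le)) // ler_wpM2l //.
rewrite (le_trans (_ : _ <= fine (L2sq g))) ?fine_le ?Hwsq_fin_num ?L2sq_le_Hwsq //.
by rewrite /Defs.variance gerBl abs2_ge0.
Qed.

Lemma L2sq_sub_TU_le delta s eps (U : {set {set 'I_d}}) g :
  supdim_cond w delta s -> in_Hw w g -> finset.set0 \in U ->
  (forall u, u \in U -> (#|u| <= s)%N) -> 0 <= eps ->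
  (forall u, (#|u| <= s)%N -> u \notin U -> gsi u g <= eps) ->
  (L2sq (fun k => (g k - TU U g k)%R) <=
    (1 - delta + #|[set u : {set 'I_d} | (#|u| <= s)%N & u \notin U]|%:R * eps)%:E
      * Hwsq w g)%E.
Proof.
move=> cond g_fin U0 U_small eps0 gsi_le; set N := [set u | _ & _].
have split_U : (\sum_(u | u \notin U) L2sq (anova u g) =
    \sum_(u : {set 'I_d} | (s < #|u|)%N) L2sq (anova u g) + \sum_(u in N) L2sq (anova u g))%E.
  rewrite (bigID (fun u : {set 'I_d} => (s < #|u|)%N)) /=; congr (_ + _)%E.
    apply: eq_bigl => u; rewrite andb_idl // => s_lt.
    by apply/negP => /U_small; rewrite leqNgt s_lt.
  by apply: eq_bigl => u; rewrite inE -leqNgt andbC.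
have low : (\sum_(u in N) L2sq (anova u g) <= (#|N|%:R * eps)%:E * Hwsq w g)%E.
  have term_le u : u \in N -> (L2sq (anova u g) <= eps%:E * Hwsq w g)%E.
    rewrite inE => /andP[u_small uU]; apply: L2sq_anova_le_gsi; rewrite ?gsi_le //.
    by apply: contraNneq uU => ->.
  rewrite (le_trans (lee_sum _ term_le)) // -ge0_sume_distrl => [|u _]; last first.
    by rewrite lee_fin.
  by rewrite sumEFin sumr_const mulr_natl.
rewrite L2sq_sub_TU split_U EFinD muleDl ?Hwsq_fin_num //.
exact: leeD (supdim_cond_le cond g_fin) low.
Qed.

End Weighted.

Theorem theorem6p1 (R : realType) (d : nat) (hd : (0 < d)%N)
  (w : freq d -> R) (hw : forall k, 1 <= w k)
  (delta : R) (hdelta : 0 < delta < 1)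
  (f : coefs R d) (hf : in_Hw w f)
  (U : {set {set 'I_d}}) (eps : R) :
  anova_subset U ->
  (forall u, u \in U -> (#|u| <= supdim w delta)%N) ->
  0 < eps ->
  (forall u : {set 'I_d}, (#|u| <= supdim w delta)%N -> u \notin U ->
     gsi u f < eps) ->
  L2norm (fun k => f k - TU U f k) / Hwnorm w f
  <= Num.sqrt (1 - delta)
     + Num.sqrt (#|[set u : {set 'I_d} | (#|u| <= supdim w delta)%N & u \notin U]|%:R
                 * eps).
Proof.
move=> [U0 _] U_small eps_gt0 gsi_lt; have /andP[_ delta_lt1] := hdelta.
have c_ge0 : 0 <= 1 - delta by rewrite subr_ge0 ltW.
have Ne_ge0 : 0 <= #|[set u : {set 'I_d} | (#|u| <= supdim w delta)%N & u \notin U]|%:R * eps.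
  by rewrite mulr_ge0 // ltW.
have := L2sq_sub_TU_le hw (supdim_cond_supdim w (ltW delta_lt1)) hf U0 U_small (ltW eps_gt0).
move=> /(_ (fun u u_small uU => ltW (gsi_lt u u_small uU))) res_le.
exact: le_trans (L2norm_div_Hwnorm_le hf (addr_ge0 c_ge0 Ne_ge0) res_le) (sqrtrD_le c_ge0 Ne_ge0).
Qed.
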